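(* Assume the network is regular. Let $j^*\in\mathcal E$. (i) $j^*\leadsto j^*$ holds if and only if there exists a child selection $J:\mathcal M\to\mathcal E$ with $j^*\notin J(\mathcal M)$ such that $J(\mathcal M)$ selects an $S$-basis. (ii) For $j'\in\mathcal E$ with $j'\neq j^*$: $j^*\leadsto j'$ holds if and only if there exists a child selection $J:\mathcal M\to\mathcal E$ with $j^*\notin J(\mathcal M)$ and $j'\in J(\mathcal M)$ such that the swapped set $\{j^*\}\cup J(\mathcal M)\setminus\{j'\}$ selects an $S$-basis.
   Context: A reaction network consists of a finite set of metabolites $\mathcal M=\{1,\dots,M\}$ and a finite set of reactions $\mathcal E=\{1,\dots,E\}$. Each reaction $j$ has an input stoichiometric vector $y^j\in\mathbb R_{\ge0}^M$ and an output stoichiometric vector $\bar y^j\in\mathbb R_{\ge0}^M$. Write $m\vdash j$ iff $y^j_m\neq 0$. The stoichiometric matrix $S$ is the real $M\times E$ matrix whose $j$-th column is $S^j=\bar y^j-y^j$; it is assumed to have full rank $M$. The rate matrix $R=(r_{jm})$ is the $E\times M$ matrix whose entries $r_{jm}$ with $m\vdash j$ are independent indeterminates, and $r_{jm}=0$ whenever $m\not\vdash j$. ''Nonzero algebraically'' means nonzero as a polynomial/rational function in these indeterminates. For $\mathcal E'\subseteq\mathcal E$, $S^{\mathcal E'}$ denotes the submatrix of columns indexed by $\mathcal E'$; $\mathcal E'$ selects an $S$-basis if $|\mathcal E'|=M$ and $\det S^{\mathcal E'}\neq0$. A child selection is an injective map $J:\mathcal M\to\mathcal E$ with $m\vdash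 J(m)$ for all $m$. The network is regular if $\det(SR)\ne0$ algebraically. Let $B=\begin{pmatrix}-\mathrm{id}_{\mathcal E}&R\\ S&0\end{pmatrix}$, a square matrix with rows and columns indexed by the disjoint union $\mathcal E\sqcup\mathcal M$; for a regular network it is invertible over the field of rational functions in the $r_{jm}$. For $\alpha\in\mathcal E\sqcup\mathcal M$ set $z^\alpha=-B^{-1}e_\alpha$, and write $\alpha\leadsto\beta$ (''$\alpha$ influences $\beta$'') for $\beta\in\mathcal E\sqcup\mathcal M$ if the component $z^\alpha_\beta$ is nonzero algebraically. (For $j^*\in\mathcal E$ one has $z^{j^*}=(\Phi^{j^*},\delta x^{j^*})$ with $\delta x^{j^*}=-(SR)^{-1}Se_{j^*}$ the linearized steady-state concentration response and $\Phi^{j^*}=e_{j^*}+R\,\delta x^{j^*}$ the flux response to a perturbation of the rate of reaction $j^*$.) *)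

From HB Require Import structures.
From mathcomp Require Import all_boot all_order all_algebra.
From mathcomp Require Import fraction.
Set Implicit Arguments. Unset Strict Implicit. Unset Printing Implicit Defensive.
Import Order.TTheory GRing.Theory Num.Theory.
Local Open Scope ring_scope.

(* Polynomial ring in n commuting indeterminates over F, built as iterated
   univariate polynomials: mpoly F 0 = F, mpoly F n.+1 = {poly mpoly F n}. *)
Fixpoint mpoly (F : idomainType) (n : nat) : idomainType :=
  if n is n'.+1 then ({poly mpoly F n'} : idomainType) else F.

Fixpoint mconst (F : idomainType) (n : nat) (c : F) : mpoly F n :=
  match n return mpoly F n with
  | 0 => c
  | n'.+1 => (mconst n' c)%:P
  end.

(* the indeterminate number i (for i < n); 0 if i >= n *)
Fixpoint mvar (F : idomainType) (n : nat) (i : nat) : mpoly F n :=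
  match n return mpoly F n with
  | 0 => 0
  | n'.+1 => if i == n' then 'X else (mvar F n' i)%:P
  end.

Definition ratfun (F : idomainType) (n : nat) : fieldType := {fraction (mpoly F n)}.

Section Network.
Variables (F : realFieldType) (M E : nat).
(* y, ybar : 'M[F]_(M,E); column j is the input / output stoichiometric vector
   y^j, ybar^j of reaction j. *)
Variables (y ybar : 'M[F]_(M, E)).

Definition enters (m : 'I_M) (j : 'I_E) : bool := y m j != 0.

Definition stoich : 'M[F]_(M, E) := ybar - y.

(* number of indeterminates: one per pair (j,m); the pair (j,m) gets index
   j*M + m. Indeterminates for pairs with m not |- j are never used. *)
Definition nvars : nat := (E * M)%N.
Definition K : fieldType := ratfun F nvars.

Definition toK (c : F) : K := @FracField.tofrac (mpoly F nvars) (mconst nvars c).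

Definition rate : 'M[K]_(E, M) :=
  \matrix_(j < E, m < M)
     if enters m j then @FracField.tofrac (mpoly F nvars) (mvar F nvars (j * M + m)) else 0.

Definition stoichK : 'M[K]_(M, E) := map_mx toK stoich.

Definition regular : Prop := \det (stoichK *m rate) != 0.

(* B = [ -id_E  R ; S  0 ], rows/columns indexed by 'I_(E + M);
   reactions are lshift M j, metabolites are rshift E m. *)
Definition Bmat : 'M[K]_(E + M) := block_mx (- 1%:M) rate stoichK 0.

Definition zvec (alpha : 'I_(E + M)) : 'cV[K]_(E + M) :=
  - (invmx Bmat *m delta_mx alpha 0).

Definition influences (alpha beta : 'I_(E + M)) : bool := zvec alpha beta 0 != 0.

Definition rxn (j : 'I_E) : 'I_(E + M) := lshift M j.

Definition child_selection (J : 'I_M -> 'I_E) : Prop :=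
  injective J /\ forall m, enters m (J m).

(* E' selects an S-basis: |E'| = M and det S^{E'} <> 0, where the columns of
   S^{E'} are listed via some bijection 'I_M -> E' (the nonvanishing of the
   determinant does not depend on the ordering). *)
Definition selects_basis (E' : {set 'I_E}) : Prop :=
  #|E'| = M /\
  exists f : 'I_M -> 'I_E,
    injective f /\ [set f i | i in 'I_M] = E' /\ \det (colsub f stoich) != 0.

End Network.

(* Solving [B z = - e_{j*}] by the Schur complement of [-id] gives
   [z_{j'} = [j' = j*] - (R (S R)^-1 S)_{j' j*}], and the matrix determinant lemma
   turns [z_{j'} det (S R)] into determinants of [S R0], where [R0] is [R] with
   reaction [j*] knocked out: [det (S R0)] if [j' = j*], and
   [det (S0 R0) - det (S' R0)] otherwise, where [S0] ([S']) is [S] with column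
   [j'] zeroed (replaced by column [j*]).  Cauchy--Binet expands [det (S R0)]
   and [det (S' R0) - det (S0 R0)] as sums over maps [f : M -> E] of monomials
   [prod_m r_{f(m) m}] times minors of [S]; a monomial survives exactly when [f]
   is a child selection avoiding [j*], and its coefficient is the minor on the
   columns [f(M)], respectively [{j*} u f(M) \ {j'}] (or [0] if [j' \notin f(M)]).
   So a nonzero sum exhibits the required child selection, and conversely
   specializing [r_{jm}] to [J m = j] isolates the minor of a given [J]. *)

From HB Require Import structures.
From mathcomp Require Import all_boot all_order all_fingroup all_algebra.
From mathcomp Require Import fraction zify.
Set Implicit Arguments. Unset Strict Implicit. Unset Printing Implicit Defensive.
Import Order.TTheory GRing.Theory Num.Theory.
Local Open Scope ring_scope.

Section IteratedPolynomialEvaluation.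
Variable F : idomainType.

Lemma mconst_is_zmod_morphism n : zmod_morphism (@mconst F n).
Proof. by elim: n => [//|n IH] x y /=; rewrite IH polyCB. Qed.

Lemma mconst_is_monoid_morphism n : monoid_morphism (@mconst F n).
Proof.
elim: n => [//|n [IH1 IH2]] /=; split; first by rewrite IH1.
by move=> x y; rewrite IH2 polyCM.
Qed.

HB.instance Definition _ n := GRing.isZmodMorphism.Build F (mpoly F n) (@mconst F n)
  (@mconst_is_zmod_morphism n).
HB.instance Definition _ n := GRing.isMonoidMorphism.Build F (mpoly F n) (@mconst F n)
  (@mconst_is_monoid_morphism n).

Variable a : nat -> F.

Fixpoint meval n : mpoly F n -> F :=
  match n return mpoly F n -> F with
  | 0 => fun p => p
  | n'.+1 => fun p => @meval n' ((p : {poly mpoly F n'}).[mconst n' (a n')])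
  end.

Lemma meval_is_zmod_morphism n : zmod_morphism (@meval n).
Proof. by elim: n => [//|n IH] x y /=; rewrite hornerD hornerN IH. Qed.

Lemma meval_is_monoid_morphism n : monoid_morphism (@meval n).
Proof.
elim: n => [//|n [IH1 IH2]] /=; split; first by rewrite hornerC IH1.
by move=> x y; rewrite hornerM IH2.
Qed.

HB.instance Definition _ n := GRing.isZmodMorphism.Build (mpoly F n) F (@meval n)
  (@meval_is_zmod_morphism n).
HB.instance Definition _ n := GRing.isMonoidMorphism.Build (mpoly F n) F (@meval n)
  (@meval_is_monoid_morphism n).

Lemma meval_const n c : meval (mconst n c) = c.
Proof. by elim: n => [//|n IH] /=; rewrite hornerC IH. Qed.

Lemma meval_var n i : (i < n)%N -> meval (mvar F n i) = a i.
Proof.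
elim: n => [//|n IH] /= lt_in.
case: eqP => [->|ne]; first by rewrite hornerX meval_const.
by rewrite hornerC IH //; move: lt_in; rewrite ltnS leq_eqVlt => /orP[/eqP|].
Qed.

End IteratedPolynomialEvaluation.

Arguments meval {F} a {n}.

Section CauchyBinet.
Variable R : comPzRingType.

Lemma det_mulmx_rowsub m n (P : 'M[R]_(m, n)) (Q : 'M[R]_(n, m)) :
  \det (P *m Q) =
  \sum_(f : {ffun 'I_m -> 'I_n}) (\prod_i P i (f i)) * \det (rowsub f Q).
Proof.
rewrite /determinant.
transitivity (\sum_(s : 'S_m) \sum_(f : {ffun 'I_m -> 'I_n})
   (-1) ^+ s * \prod_i (P i (f i) * Q (f i) (s i))).
  apply: eq_bigr => s _; rewrite -big_distrr /=; congr (_ * _).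
  rewrite -(bigA_distr_bigA (fun i j => P i j * Q j (s i))).
  by apply: eq_bigr => i _; rewrite mxE.
rewrite exchange_big; apply: eq_bigr => f _ /=; rewrite big_distrr.
apply: eq_bigr => s _ /=; rewrite big_split /= mulrCA; congr (_ * (_ * _)).
by apply: eq_bigr => i _; rewrite mxE.
Qed.

Lemma det_mulmx_colsub m n (P : 'M[R]_(m, n)) (Q : 'M[R]_(n, m)) :
  \det (P *m Q) =
  \sum_(f : {ffun 'I_m -> 'I_n}) (\prod_i Q (f i) i) * \det (colsub f P).
Proof.
rewrite -det_tr trmx_mul det_mulmx_rowsub; apply: eq_bigr => f _.
congr (_ * _); first by apply: eq_bigr => i _; rewrite mxE.
by rewrite -det_tr; congr (\det _); apply/matrixP => i j; rewrite !mxE.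
Qed.

Lemma det_colsub_noninjective m n (X : 'M[R]_(m, n)) (f : 'I_m -> 'I_n) :
  ~~ injectiveb f -> \det (colsub f X) = 0.
Proof.
case/injectivePn => i1 [i2 ne e]; rewrite -det_tr.
by apply: (determinant_alternate ne) => j; rewrite !mxE e.
Qed.

Lemma mulmx_selection m n p (X : 'M[R]_(p, n)) (f : 'I_m -> 'I_n) :
  X *m \matrix_(j, i) (f i == j)%:R = colsub f X.
Proof.
apply/matrixP => k i; rewrite !mxE (bigD1 (f i)) //= big1 ?addr0.
  by rewrite mxE eqxx mulr1.
by move=> j ne; rewrite mxE eq_sym (negbTE ne) mulr0.
Qed.

End CauchyBinet.

Lemma det_colsub_neq0_imset (R : idomainType) m n (X : 'M[R]_(m, n))
    (f g : 'I_m -> 'I_n) :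
  injective f -> injective g -> [set f i | i in 'I_m] = [set g i | i in 'I_m] ->
  (\det (colsub g X) != 0) = (\det (colsub f X) != 0).
Proof.
move=> f_inj g_inj fg_img.
have f_onto i : exists k, f k == g i.
  have : g i \in [set f i | i in 'I_m] by rewrite fg_img imset_f.
  by case/imsetP => k _ ->; exists k.
pose s i := xchoose (f_onto i).
have fs i : f (s i) = g i by apply/eqP/(xchooseP (f_onto i)).
have s_inj : injective s by move=> i1 i2 e; apply: g_inj; rewrite -!fs e.
have -> : colsub g X = col_perm (perm s_inj) (colsub f X).
  by apply/matrixP => i j; rewrite !mxE permE fs.
by rewrite col_permE det_mulmx det_perm mulf_eq0 signr_eq0 orbF.
Qed.

Lemma det_add_rank1_mul (R : comPzRingType) n (X : 'M[R]_n) (v : 'cV[R]_n) (w : 'rV[R]_n) :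
  \det (X + v *m w) * \det X = (\det X + (w *m \adj X *m v) 0 0) * \det X.
Proof.
pose C := block_mx (1%:M : 'M[R]_1) w (- v) X.
have detC : \det C = \det (X + v *m w).
  have -> : C = block_mx 1%:M 0 (- v) 1%:M *m block_mx 1%:M w 0 (X + v *m w).
    rewrite mulmx_block /C !mul1mx !mul0mx ?mulmx0 !addr0 mulmx1 mulNmx.
    by rewrite addrC addrK.
  by rewrite det_mulmx det_lblock det_ublock !det1 !mul1r.
have C_adj : C *m block_mx (\det X)%:M 0 (\adj X *m v) 1%:M
    = block_mx ((\det X)%:M + w *m (\adj X *m v)) w 0 X.
  rewrite mulmx_block /C !mul1mx mulmx0 add0r mulmx1 (mulmxA X) mul_mx_adj.
  by rewrite mul_scalar_mx mul_mx_scalar add0r mulmx1 scalerN addNr.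
have := congr1 determinant C_adj.
rewrite det_mulmx det_lblock det_ublock detC det1 mulr1 det_scalar1 => ->.
by rewrite det_mx11 -mulmxA !mxE eqxx mulr1n.
Qed.

Section MatrixDeterminantLemma.
Variables (R : idomainType) (n : nat).
Implicit Types (X : 'M[R]_n) (u v : 'cV[R]_n) (w z : 'rV[R]_n).

(* For singular [X], cancel [\det] in the generic matrix [X - 'X%:M] and
   evaluate at [0]. *)
Lemma det_add_rank1 X v w : \det (X + v *m w) = \det X + (w *m \adj X *m v) 0 0.
Proof.
pose Xp : 'M[{poly R}]_n := char_poly_mx (- X).
have Xp_neq0 : \det Xp != 0 by apply/monic_neq0/char_poly_monic.
have := det_add_rank1_mul Xp (map_mx polyC v) (map_mx polyC w).
move/(mulIf Xp_neq0) => XpE.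
have ev0C m k (A : 'M[R]_(m, k)) : map_mx (horner_eval (0 : R)) (map_mx polyC A) = A.
  by apply/matrixP => i j; rewrite !mxE /horner_eval hornerC.
have ev0Xp : map_mx (horner_eval (0 : R)) Xp = X.
  apply/matrixP => i j; rewrite !mxE /horner_eval.
  by rewrite hornerD hornerN hornerMn hornerX hornerC mul0rn sub0r opprK.
transitivity ((horner_eval (0 : R)) (\det (Xp + map_mx polyC v *m map_mx polyC w))).
  by rewrite -det_map_mx map_mxD map_mxM ev0Xp !ev0C.
rewrite XpE rmorphD -det_map_mx ev0Xp; congr (_ + _).
transitivity
  ((map_mx (horner_eval (0 : R)) (map_mx polyC w *m \adj Xp *m map_mx polyC v)) 0 0).
  by rewrite [RHS]mxE.
by rewrite !map_mxM map_mx_adj ev0Xp !ev0C.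
Qed.

Lemma adj_form_add_rank1l X v w z :
  (w *m \adj (X + v *m z) *m v) 0 0 = (w *m \adj X *m v) 0 0.
Proof.
have := det_add_rank1 X v (z + w).
rewrite mulmxDr addrA !det_add_rank1 -addrA !mulmxDl [((_ + _ : 'M[R]_1) 0 0)]mxE.
by move/addrI/addrI.
Qed.

Lemma adj_form_add_rank1r X u v w :
  (w *m \adj (X + u *m w) *m v) 0 0 = (w *m \adj X *m v) 0 0.
Proof.
have := det_add_rank1 X (u + v) w.
rewrite mulmxDl addrA !det_add_rank1 -addrA !mulmxDr [((_ + _ : 'M[R]_1) 0 0)]mxE.
by move/addrI/addrI.
Qed.

End MatrixDeterminantLemma.

Section ZeroRowColumn.
Variable R : pzRingType.

Definition zero_row m n (j : 'I_m) (Y : 'M[R]_(m, n)) : 'M[R]_(m, n) :=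
  \matrix_(i, k) if i == j then 0 else Y i k.

Definition zero_col m n (j : 'I_n) (X : 'M[R]_(m, n)) : 'M[R]_(m, n) :=
  \matrix_(i, k) if k == j then 0 else X i k.

Lemma mulmx_zero_row_split m n p (X : 'M[R]_(m, n)) (Y : 'M[R]_(n, p)) j :
  X *m Y = X *m zero_row j Y + col j X *m row j Y.
Proof.
apply/matrixP => i k; rewrite !mxE (bigD1 j) //= [X in _ = _ + X]big_ord1 !mxE.
rewrite addrC [in RHS](bigD1 j) //= !mxE eqxx mulr0 add0r; congr (_ + _).
by apply: eq_bigr => l /negbTE ne; rewrite mxE ne.
Qed.

Lemma mulmx_zero_col_split m n p (X : 'M[R]_(m, n)) (Y : 'M[R]_(n, p)) j :
  X *m Y = zero_col j X *m Y + col j X *m row j Y.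
Proof.
apply/matrixP => i k; rewrite !mxE (bigD1 j) //= [X in _ = _ + X]big_ord1 !mxE.
rewrite addrC [in RHS](bigD1 j) //= !mxE eqxx mul0r add0r; congr (_ + _).
by apply: eq_bigr => l /negbTE ne; rewrite mxE ne.
Qed.

End ZeroRowColumn.

Lemma map_zero_row (R R' : pzRingType) (f : {additive R -> R'}) m n (j : 'I_m)
    (Y : 'M[R]_(m, n)) :
  map_mx f (zero_row j Y) = zero_row j (map_mx f Y).
Proof. by apply/matrixP => i k; rewrite !mxE; case: ifP; rewrite ?raddf0. Qed.

Lemma map_zero_col (R R' : pzRingType) (f : {additive R -> R'}) m n (j : 'I_n)
    (X : 'M[R]_(m, n)) :
  map_mx f (zero_col j X) = zero_col j (map_mx f X).
Proof. by apply/matrixP => i k; rewrite !mxE; case: ifP; rewrite ?raddf0. Qed.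

Definition replace_by (T : eqType) (a b x : T) : T := if x == a then b else x.

Lemma replace_by_imset n m (f : 'I_n -> 'I_m) (a b : 'I_m) :
  injective f -> b \notin [set f i | i in 'I_n] -> a \in [set f i | i in 'I_n] ->
  injective (replace_by a b \o f) /\
  [set (replace_by a b \o f) i | i in 'I_n] = b |: ([set f i | i in 'I_n] :\ a).
Proof.
move=> f_inj b_out a_in.
have f_in i : f i \in [set f i | i in 'I_n] by apply: imset_f.
split.
  move=> i1 i2; rewrite /= /replace_by; case: eqP => e1; case: eqP => e2 e.
  - by apply: f_inj; rewrite e1 e2.
  - by move: b_out; rewrite e f_in.
  - by move: b_out; rewrite -e f_in.
  - exact: f_inj.
apply/setP => x; rewrite in_setU1 in_setD1; apply/imsetP/idP.
  move=> [i _ ->]; rewrite /= /replace_by; case: (f i =P a) => [_|ne].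
    by rewrite eqxx.
  by rewrite f_in andbT; apply/orP; right; apply/eqP.
case/orP => [/eqP -> | /andP [x_a /imsetP [i _ x_fi]]].
  by case/imsetP: a_in => i _ e; exists i => //; rewrite e /= /replace_by eqxx.
by exists i => //; rewrite /= /replace_by -x_fi (negbTE x_a).
Qed.

Lemma det_colsub_replace_by (R : comPzRingType) n m (X : 'M[R]_(n, m))
    (f : 'I_n -> 'I_m) (a b : 'I_m) :
  \det (colsub f (colsub (replace_by a b) X)) - \det (colsub f (zero_col a X)) =
  if a \in [set f i | i in 'I_n] then \det (colsub (replace_by a b \o f) X) else 0.
Proof.
case: ifP => [/imsetP [k _ a_fk] | a_out].
  rewrite -colsub_comp (expand_det_col (colsub f (zero_col a X)) k) big1 ?subr0 //.
  by move=> i _; rewrite !mxE -a_fk eqxx mul0r.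
apply/eqP; rewrite subr_eq0; apply/eqP; congr (\det _); apply/matrixP => i k.
have fk_a : f k != a by apply: contraFN a_out => /eqP <-; apply: imset_f.
by rewrite !mxE /replace_by (negbTE fk_a).
Qed.

Section ReactionNetwork.
Variables (F : realFieldType) (M E : nat) (y ybar : 'M[F]_(M, E)).

Lemma toK_is_zmod_morphism : zmod_morphism (@toK F M E).
Proof. by move=> a b; rewrite /toK !rmorphB. Qed.

Lemma toK_is_monoid_morphism : monoid_morphism (@toK F M E).
Proof. by split; [rewrite /toK !rmorph1 | move=> a b; rewrite /toK !rmorphM]. Qed.

HB.instance Definition _ := GRing.isZmodMorphism.Build F (K F M E) (@toK F M E)
  toK_is_zmod_morphism.
HB.instance Definition _ := GRing.isMonoidMorphism.Build F (K F M E) (@toK F M E)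
  toK_is_monoid_morphism.

Local Notation S := (stoich y ybar).
Local Notation SK := (stoichK y ybar).
Local Notation R := (rate y).
Local Notation A := (SK *m R).

Lemma zvec_rxnE (reg : regular y ybar) (js j : 'I_E) :
  zvec y ybar (rxn M js) (rxn M j) 0 = (j == js)%:R - (R *m invmx A *m SK) j js.
Proof.
have A_unit : A \in unitmx by rewrite unitmxE unitfE.
pose C := block_mx (R *m invmx A *m SK - 1%:M) (R *m invmx A) (invmx A *m SK) (invmx A).
have BC : Bmat y ybar *m C = 1%:M.
  rewrite /Bmat /C mulmx_block [RHS]scalar_mx_block; congr block_mx.
  - by rewrite mulNmx mul1mx opprB mulmxA subrK.
  - by rewrite mulNmx mul1mx addNr.
  - by rewrite mul0mx addr0 mulmxBr mulmx1 !mulmxA (mulmxV A_unit) mul1mx subrr.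
  - by rewrite mul0mx addr0 mulmxA (mulmxV A_unit).
have [B_unit _] := mulmx1_unit BC.
have invB : invmx (Bmat y ybar) = C.
  by rewrite -[C]mul1mx -(mulVmx B_unit) -mulmxA BC mulmx1.
by rewrite /zvec invB -colE mxE /rxn [col _ _ _ _]mxE block_mxEul !mxE opprB eq_sym.
Qed.

Lemma zvec_rxn_mul_det (reg : regular y ybar) (js j : 'I_E) :
  zvec y ybar (rxn M js) (rxn M j) 0 * \det A =
  (j == js)%:R * \det A - (row j R *m \adj A *m col js SK) 0 0.
Proof.
have A_unit : A \in unitmx by rewrite unitmxE unitfE.
rewrite zvec_rxnE // mulrBl; congr (_ - _).
rewrite /invmx A_unit -scalemxAr -scalemxAl mxE mulrAC mulVf // mul1r !mxE.
apply: eq_bigr => k _; rewrite !mxE; congr (_ * _).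
by apply: eq_bigr => l _; rewrite !mxE.
Qed.

Lemma zvec_rxn_self (reg : regular y ybar) (js : 'I_E) :
  zvec y ybar (rxn M js) (rxn M js) 0 * \det A = \det (SK *m zero_row js R).
Proof.
rewrite zvec_rxn_mul_det // eqxx mul1r.
have -> : SK *m zero_row js R = A + (- col js SK) *m row js R.
  by rewrite mulNmx (mulmx_zero_row_split SK R js) addrK.
by rewrite det_add_rank1 mulmxN [((- _ : 'M_1) 0 0)]mxE.
Qed.

(* With [A0 := zero_col j S *m zero_row js R], [A = A0 + col j S row j R +
   col js S row js R], and neither rank-one update changes the form
   [row j R *m \adj _ *m col js S]. *)
Lemma zvec_rxn_other (reg : regular y ybar) (js j : 'I_E) : j != js ->
  zvec y ybar (rxn M js) (rxn M j) 0 * \det A =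
  \det (zero_col j SK *m zero_row js R)
  - \det (colsub (replace_by j js) SK *m zero_row js R).
Proof.
move=> j_js.
rewrite zvec_rxn_mul_det // (negbTE j_js) mul0r sub0r.
set R0 := zero_row js R; pose A0 := zero_col j SK *m R0.
have rowR0 : row j R0 = row j R by apply/matrixP => i k; rewrite !mxE (negbTE j_js).
have A_split : A = A0 + col j SK *m row j R + col js SK *m row js R.
  by rewrite [LHS](mulmx_zero_row_split _ _ js) -/R0 (mulmx_zero_col_split _ _ j) rowR0.
have -> : colsub (replace_by j js) SK *m R0 = A0 + col js SK *m row j R.
  rewrite (mulmx_zero_col_split _ _ j) rowR0.
  have -> : zero_col j (colsub (replace_by j js) SK) = zero_col j SK.
    by apply/matrixP => i k; rewrite !mxE /replace_by; case: (k =P j).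
  have -> // : col j (colsub (replace_by j js) SK) = col js SK.
  by apply/matrixP => i k; rewrite !mxE /replace_by eqxx.
by rewrite A_split adj_form_add_rank1l adj_form_add_rank1r det_add_rank1 opprD addNKr.
Qed.

Lemma influences_rxnE (reg : regular y ybar) (js j : 'I_E) :
  influences y ybar (rxn M js) (rxn M j) =
  (zvec y ybar (rxn M js) (rxn M j) 0 * \det A != 0).
Proof. by rewrite /influences mulf_eq0 negb_or reg andbT. Qed.

Lemma det_colsub_stoichK (f : 'I_M -> 'I_E) :
  (\det (colsub f SK) != 0) = (\det (colsub f S) != 0).
Proof.
have -> : colsub f SK = map_mx (@toK F M E) (colsub f S).
  by apply/matrixP => i j; rewrite !mxE.
by rewrite det_map_mx fmorph_eq0.
Qed.

Lemma selects_basis_imset (f : 'I_M -> 'I_E) : injective f ->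
  selects_basis y ybar [set f i | i in 'I_M] <-> \det (colsub f S) != 0.
Proof.
move=> f_inj; split => [[_ [g [g_inj [g_img g_det]]]] | f_det].
  by rewrite (det_colsub_neq0_imset _ g_inj f_inj).
by split; [rewrite card_imset // card_ord | exists f].
Qed.

Lemma child_selection_of_sum_neq0 (js : 'I_E) (c : {ffun 'I_M -> 'I_E} -> K F M E) :
  (forall f : {ffun 'I_M -> 'I_E}, ~~ injectiveb f -> c f = 0) ->
  \sum_(f : {ffun 'I_M -> 'I_E}) (\prod_i zero_row js R (f i) i) * c f != 0 ->
  exists f : {ffun 'I_M -> 'I_E},
    [/\ child_selection y f, js \notin [set f i | i in 'I_M] & c f != 0].
Proof.
move=> c_inj sum_neq0.
have /existsP [f] :
    [exists f : {ffun 'I_M -> 'I_E}, (\prod_i zero_row js R (f i) i) * c f != 0].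
  apply: contraR sum_neq0 => /existsPn all0; apply/eqP/big1 => f _.
  by apply/eqP; move: (all0 f); rewrite negbK.
rewrite mulf_eq0 negb_or => /andP [prod_neq0 cf_neq0].
have R0_neq0 i : zero_row js R (f i) i != 0.
  by move: prod_neq0; rewrite prodf_seq_neq0 => /allP; apply; rewrite mem_index_enum.
have f_js i : f i != js by apply: contraNneq (R0_neq0 i) => ->; rewrite mxE eqxx.
have f_enters i : enters y i (f i).
  by move: (R0_neq0 i); rewrite !mxE (negbTE (f_js i)); case: ifP; rewrite ?eqxx.
exists f; split => //.
- by split=> //; apply/injectiveP/(contraNT _ cf_neq0) => /c_inj ->.
- by apply/imsetP => -[i _ /eqP]; apply/negP; rewrite eq_sym f_js.
Qed.

Definition Rpoly : 'M[mpoly F (nvars M E)]_(E, M) :=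
  \matrix_(j < E, m < M) if enters y m j then mvar F (nvars M E) (j * M + m) else 0.

Definition knockout_poly (X : 'M[F]_(M, E)) (js : 'I_E) : mpoly F (nvars M E) :=
  \det (map_mx (@mconst F (nvars M E)) X *m zero_row js Rpoly).

Lemma rate_tofrac : R = map_mx (@FracField.tofrac _) Rpoly.
Proof. by apply/matrixP => j m; rewrite !mxE; case: ifP; rewrite ?rmorph0. Qed.

Lemma knockout_polyE (X : 'M[F]_(M, E)) (js : 'I_E) :
  \det (map_mx (@toK F M E) X *m zero_row js R) = FracField.tofrac (knockout_poly X js).
Proof.
rewrite /knockout_poly -det_map_mx map_mxM map_zero_row -rate_tofrac.
by congr (\det (_ *m _)); apply/matrixP => i k; rewrite !mxE.
Qed.

(* Specialization of the rate indeterminates at a child selection [J]: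
   [r_{jm} := (J m == j)]. *)
Definition selection_point (J : 'I_M -> 'I_E) (n : nat) : F :=
  [exists m : 'I_M, n == (J m * M + m)%N]%:R.

Lemma selection_pointE (J : 'I_M -> 'I_E) (j : 'I_E) (m : 'I_M) :
  selection_point J (j * M + m) = (J m == j)%:R.
Proof.
rewrite /selection_point; congr (nat_of_bool _)%:R.
apply/existsP/eqP => [[k /eqP jm_k] | <-]; last by exists m.
have M_gt0 : (0 < M)%N by apply: leq_ltn_trans (ltn_ord m).
have := congr1 (modn^~ M) jm_k; rewrite /= !modnMDl !modn_small // => /val_inj mk.
subst k; move/eqP: jm_k; rewrite eqn_add2r eqn_pmul2r // => /eqP jJ.
exact/val_inj.
Qed.

Lemma meval_knockout_rate (J : 'I_M -> 'I_E) (js : 'I_E) :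
  child_selection y J -> js \notin [set J m | m in 'I_M] ->
  map_mx (meval (selection_point J)) (zero_row js Rpoly) = \matrix_(j, m) (J m == j)%:R.
Proof.
move=> [_ J_enters] js_out; apply/matrixP => j m; rewrite !mxE.
have var_lt : (j * M + m < nvars M E)%N.
  by rewrite /nvars; have := ltn_ord j; have := ltn_ord m; nia.
case: (j =P js) => [-> | _].
  by case: (J m =P js) js_out => [<- | _ _]; rewrite ?imset_f ?rmorph0.
case: ifP => [_ | not_enters]; first by rewrite meval_var // selection_pointE.
by case: (J m =P j) not_enters => [<- | _ _]; rewrite ?J_enters ?rmorph0.
Qed.

Lemma meval_knockout_poly (J : 'I_M -> 'I_E) (X : 'M[F]_(M, E)) (js : 'I_E) :
  child_selection y J -> js \notin [set J m | m in 'I_M] ->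
  meval (selection_point J) (knockout_poly X js) = \det (colsub J X).
Proof.
move=> J_sel js_out; rewrite /knockout_poly -det_map_mx map_mxM.
rewrite meval_knockout_rate // -(mulmx_selection X J); congr (\det (_ *m _)).
by apply/matrixP => i k; rewrite !mxE; apply: meval_const.
Qed.

Lemma influences_rxn_self (reg : regular y ybar) (js : 'I_E) :
  influences y ybar (rxn M js) (rxn M js) <->
  exists J : 'I_M -> 'I_E, child_selection y J /\
    js \notin [set J m | m in 'I_M] /\ selects_basis y ybar [set J m | m in 'I_M].
Proof.
rewrite influences_rxnE // zvec_rxn_self //; split.
  rewrite det_mulmx_colsub => sum_neq0.
  have [f [f_sel js_out f_det]] :=
    child_selection_of_sum_neq0 (fun f => @det_colsub_noninjective _ _ _ SK f) sum_neq0.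
  exists f; do 2!split=> //.
  by rewrite selects_basis_imset -?det_colsub_stoichK //; case: f_sel.
move=> [J [J_sel [js_out J_basis]]].
have J_det : \det (colsub J S) != 0 by rewrite -selects_basis_imset //; case: J_sel.
rewrite knockout_polyE tofrac_eq0; apply: contra J_det => /eqP kp0.
by rewrite -(meval_knockout_poly S J_sel js_out) kp0 rmorph0.
Qed.

Lemma influences_rxn_other (reg : regular y ybar) (js j : 'I_E) : j != js ->
  influences y ybar (rxn M js) (rxn M j) <->
  exists J : 'I_M -> 'I_E, child_selection y J /\
    js \notin [set J m | m in 'I_M] /\ j \in [set J m | m in 'I_M] /\
    selects_basis y ybar (js |: ([set J m | m in 'I_M] :\ j)).
Proof.
move=> j_js; rewrite influences_rxnE // zvec_rxn_other // -oppr_eq0 opprB; split.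
  rewrite !det_mulmx_colsub -sumrB; under eq_bigr do rewrite -mulrBr.
  move=> sum_neq0; have [f f_noninj | f [f_sel js_out]] :=
    child_selection_of_sum_neq0 _ sum_neq0.
    by rewrite !det_colsub_noninjective ?subrr.
  rewrite det_colsub_replace_by; case: ifP => [j_in f_det | _]; last by rewrite eqxx.
  exists f; do 3!split=> //.
  have [g_inj <-] := replace_by_imset f_sel.1 js_out j_in.
  by rewrite selects_basis_imset // -det_colsub_stoichK.
move=> [J [J_sel [js_out [j_in J_basis]]]].
have [g_inj g_img] := replace_by_imset J_sel.1 js_out j_in.
move: J_basis; rewrite -g_img selects_basis_imset // => J_det.
rewrite /stoichK -map_mxsub -map_zero_col !knockout_polyE -rmorphB tofrac_eq0.
apply: contra J_det => /eqP kp0.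
have := det_colsub_replace_by S J j js.
by rewrite j_in -!(meval_knockout_poly _ J_sel js_out) -rmorphB kp0 rmorph0 => <-.
Qed.

End ReactionNetwork.

Theorem theorem2p2 (F : realFieldType) (M E : nat) (y ybar : 'M[F]_(M, E))
  (y_nonneg : forall m j, 0 <= y m j) (ybar_nonneg : forall m j, 0 <= ybar m j)
  (S_full_rank : \rank (stoich y ybar) = M)
  (reg : regular y ybar) (jstar : 'I_E) :
  (influences y ybar (rxn M jstar) (rxn M jstar) <->
     exists J : 'I_M -> 'I_E, child_selection y J /\
       jstar \notin [set J m | m in 'I_M] /\
       selects_basis y ybar [set J m | m in 'I_M])
  /\
  (forall j' : 'I_E, j' != jstar ->
     (influences y ybar (rxn M jstar) (rxn M j') <->
        exists J : 'I_M -> 'I_E, child_selection y J /\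
          jstar \notin [set J m | m in 'I_M] /\
          j' \in [set J m | m in 'I_M] /\
          selects_basis y ybar (jstar |: ([set J m | m in 'I_M] :\ j')))).
Proof.
split; first exact: influences_rxn_self.
by move=> j' j'_jstar; apply: influences_rxn_other.
Qed.
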